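(* Let $1<p\le\infty$. Every symmetric space $X$ on $[0,1]$ with property $(D_p)$ has property $(UD_p)$.
   Context: A symmetric (rearrangement invariant) space $X$ on $[0,1]$ is a Banach space of (classes of) Lebesgue measurable functions on $[0,1]$ with the ideal property ($|x|\le|y|$ a.e., $y\in X$ imply $x\in X$, $\|x\|_X\le\|y\|_X$) such that if $y\in X$ and $x^*=y^*$ (non-increasing rearrangements) then $x\in X$ and $\|x\|_X=\|y\|_X$. For $1<p\le\infty$ ($\ell_\infty$ meaning $c_0$), $X$ has property $(D_p)$ if every sequence $(x_n)$ of pairwise disjointly supported elements with $\|x_n\|_X\le1$ has a subsequence $(x_{n_k})$ and a constant $C>0$ with $\|\sum_kc_kx_{n_k}\|_X\le C\|(c_k)\|_{\ell_p}$ for all $(c_k)\in\ell_p$; $X$ has property $(UD_p)$ if the constant $C$ can be chosen the same for all such sequences. *)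

From HB Require Import structures.
From mathcomp Require Import all_boot all_order all_algebra.
From mathcomp Require Import all_classical all_reals all_analysis.
Set Implicit Arguments. Unset Strict Implicit. Unset Printing Implicit Defensive.
Import Order.TTheory GRing.Theory Num.Theory.
Import numFieldNormedType.Exports.
Local Open Scope classical_set_scope.
Local Open Scope ring_scope.

Section SymSpaces.
Variable R : realType.

Definition leb := (@lebesgue_measure R).
Definition I01 : set R := `[0%R, 1%R].

Definition ae01 (P : R -> Prop) : Prop :=
  {ae leb, forall s, I01 s -> P s}.

Definition distr (x : R -> R) (t : R) : \bar R :=
  leb [set s | I01 s /\ t < `|x s|].

Definition rearr (x : R -> R) (t : R) : \bar R :=
  ereal_inf ((fun s : R => s%:E) @` [set s : R | 0 <= s /\ (distr x s <= t%:E)%E]).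

(* X = (mem, nrm) is a symmetric (rearrangement invariant) Banach function
   space on [0,1]: mem is the set of (representatives of) elements of X and
   nrm the norm. *)
Definition is_symmetric_space (mem : set (R -> R)) (nrm : (R -> R) -> R) : Prop :=
  [/\
      (forall x : R -> R, mem x -> measurable_fun I01 x) /\
      (mem (fun _ => 0) /\
      (forall x y, mem x -> mem y -> mem (fun s => x s + y s)) /\
      (forall (a : R) x, mem x -> mem (fun s => a * x s))),
      (* norm (on classes modulo a.e. equality on [0,1]) *)
      (forall x, mem x -> nrm x = 0 -> ae01 (fun s => x s = 0)) /\
      (forall x y, mem x -> mem y -> nrm (fun s => x s + y s) <= nrm x + nrm y) /\
      (forall (a : R) x, mem x -> nrm (fun s => a * x s) = `|a| * nrm x),
      (forall u : nat -> R -> R, (forall n, mem (u n)) ->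
         (forall e : R, 0 < e -> exists N : nat, forall m n : nat, (N <= m)%N -> (N <= n)%N ->
            nrm (fun s => u m s - u n s) <= e) ->
         (exists y, mem y /\ forall e : R, 0 < e -> exists N : nat, forall n : nat, (N <= n)%N ->
            nrm (fun s => u n s - y s) <= e)),
      (forall x y : R -> R, measurable_fun I01 x -> mem y ->
         ae01 (fun s => `|x s| <= `|y s|) -> mem x /\ nrm x <= nrm y)
    &
      (forall x y : R -> R, measurable_fun I01 x -> mem y ->
         (forall t, I01 t -> rearr x t = rearr y t) -> mem x /\ nrm x = nrm y)].

Definition disjoint_seq (x : nat -> R -> R) : Prop :=
  forall n m : nat, n <> m -> ae01 (fun s => x n s = 0 \/ x m s = 0).

Definition lpnorm (p : \bar R) (N : nat) (c : nat -> R) : R :=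
  match p with
  | EFin q => (\sum_(k < N) `|c k| `^ q) `^ q^-1
  | _ => \big[Num.max/0]_(k < N) `|c k|
  end.

Definition strictly_incr (phi : nat -> nat) : Prop :=
  forall i j : nat, (i < j)%N -> (phi i < phi j)%N.

Definition comb (x : nat -> R -> R) (phi : nat -> nat) (N : nat) (c : nat -> R) : R -> R :=
  fun s => \sum_(k < N) c k * x (phi k) s.

Definition upper_p_estimate (nrm : (R -> R) -> R) (p : \bar R)
    (x : nat -> R -> R) (phi : nat -> nat) (C : R) : Prop :=
  forall (N : nat) (c : nat -> R), nrm (comb x phi N c) <= C * lpnorm p N c.

Definition normalized_disjoint (mem : set (R -> R)) (nrm : (R -> R) -> R)
    (x : nat -> R -> R) : Prop :=
  (forall n, mem (x n)) /\ (forall n, nrm (x n) <= 1) /\ disjoint_seq x.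

Definition property_D (mem : set (R -> R)) (nrm : (R -> R) -> R) (p : \bar R) : Prop :=
  forall x : nat -> R -> R, normalized_disjoint mem nrm x ->
    exists phi, strictly_incr phi /\ exists C : R, 0 < C /\ upper_p_estimate nrm p x phi C.

Definition property_UD (mem : set (R -> R)) (nrm : (R -> R) -> R) (p : \bar R) : Prop :=
  exists C : R, 0 < C /\ forall x : nat -> R -> R, normalized_disjoint mem nrm x ->
    exists phi, strictly_incr phi /\ upper_p_estimate nrm p x phi C.

End SymSpaces.

From HB Require Import structures.
From mathcomp Require Import all_boot all_order all_algebra.
From mathcomp Require Import all_classical all_reals all_analysis.
From mathcomp Require Import ring.
Set Implicit Arguments. Unset Strict Implicit. Unset Printing Implicit Defensive.
Import Order.TTheory GRing.Theory Num.Theory.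
Import numFieldNormedType.Exports.
Local Open Scope classical_set_scope.
Local Open Scope ring_scope.

(* Suppose (UD_p) fails.  Then for every m there is a normalized disjoint
   sequence no subsequence of which has an upper p-estimate with constant
   (m + 1) 2^(m+1); dropping finitely many terms, its supports lie in a set
   A_m of measure at most w_m = 2^-(m+1).  The quantile function of Lebesgue
   measure on A_m maps the window [w_m, w_m + |A_m|) of [w_m, 2 w_m) onto A_m
   preserving measure, so composing with it transplants the m-th sequence into
   the m-th window without changing rearrangements; the windows are pairwise
   disjoint.  Gluing the transplanted sequences with weights w_m gives a single
   normalized disjoint sequence; by (D_p) some subsequence of it has an upper
   p-estimate with some constant C.  Restricting its combinations to the m-th
   window, for m + 1 >= C, yields an upper p-estimate with constant
   (m + 1) / w_m for a subsequence of the m-th sequence: a contradiction. *)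

Section UnitInterval.
Variable R : realType.
Local Notation mu := (@lebesgue_measure R).

Lemma measurable_I01 : measurable (@I01 R).
Proof. exact: measurable_itv. Qed.

Lemma lebesgue_I01 : mu (@I01 R) = 1%E.
Proof. by rewrite /I01 lebesgue_measure_itv /= lte_fin ltr01 oppr0 adde0. Qed.

Lemma lebesgue_sub_I01 (X : set R) : measurable X -> X `<=` @I01 R ->
  mu X = (fine (mu X))%:E.
Proof.
move=> mX XI; rewrite fineK // ge0_fin_numE ?measure_ge0 //.
apply: (le_lt_trans _ (ltry 1)); rewrite -lebesgue_I01.
by apply: le_measure => //; rewrite inE //; exact: measurable_I01.
Qed.

Lemma ae01S (P Q : R -> Prop) :
  (forall s, @I01 R s -> P s -> Q s) -> ae01 P -> ae01 Q.
Proof.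
move=> PQ; rewrite /ae01 /leb => -[N [mN N0 PN]]; exists N; split => // s /= nQ.
by apply: PN => /= HP; apply: nQ => Is; exact: PQ Is (HP Is).
Qed.

Lemma ae01_foralln (P : nat -> R -> Prop) :
  (forall n, ae01 (P n)) -> ae01 (fun s => forall n, P n s).
Proof.
rewrite /ae01 /leb => /ae_foralln [N [mN N0 PN]]; exists N; split => // s /= nP.
by apply: PN => /= HP; apply: nP => Is n; exact: HP n Is.
Qed.

End UnitInterval.

Section Quantile.
Variables (R : realType) (A : set R).
Hypotheses (mA : measurable A) (AI : A `<=` @I01 R).
Variable b : R.
Local Notation mu := (@lebesgue_measure R).

Definition mass := fine (mu A).
Definition cdf (s : R) := fine (mu (A `&` `]-oo, s[)).

Let measurable_below s : measurable (A `&` `]-oo, s[).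
Proof. by apply: measurableI => //; exact: measurable_itv. Qed.

Lemma cdfE s : mu (A `&` `]-oo, s[) = (cdf s)%:E.
Proof.
by apply: lebesgue_sub_I01 => //; exact: subset_trans (@subIsetl _ _ _) AI.
Qed.

Lemma massE : mu A = mass%:E.
Proof. exact: lebesgue_sub_I01. Qed.

Lemma cdf_ge0 s : 0 <= cdf s.
Proof. by rewrite -lee_fin -cdfE measure_ge0. Qed.

Lemma cdf_nondecreasing : {homo cdf : s t / s <= t}.
Proof.
move=> s t st; rewrite -lee_fin -!cdfE.
apply: le_measure; rewrite ?inE; try exact: measurable_below.
by apply: setIS => x /=; rewrite !in_itv /= => xs; exact: lt_le_trans xs st.
Qed.

Lemma cdf_le_mass s : cdf s <= mass.
Proof.
rewrite -lee_fin -cdfE -massE; apply: le_measure; rewrite ?inE //.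
exact: measurable_below.
Qed.

Lemma cdf_le0 s : s <= 0 -> cdf s = 0.
Proof.
move=> s0; rewrite /cdf (_ : A `&` _ = set0) ?measure0 //.
apply/seteqP; split => x // [/AI]; rewrite /I01 /= !in_itv /= => /andP[x0 _].
by rewrite ltNge (le_trans s0 x0).
Qed.

Lemma cdf_gt1 s : 1 < s -> cdf s = mass.
Proof.
move=> s1; rewrite /cdf /mass (_ : A `&` _ = A) //.
apply/seteqP; split => [x [] // | x Ax]; split => //=; rewrite in_itv /=.
by move/AI: Ax; rewrite /I01 /= in_itv /= => /andP[_ x1]; exact: le_lt_trans x1 s1.
Qed.

Lemma cdf_left_continuous s v : v < cdf s -> exists2 s', s' < s & v < cdf s'.
Proof.
move=> vs.
pose F n := A `&` `]-oo, s - n.+1%:R^-1[.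
have mF n : measurable (F n) by exact: measurable_below.
have UF : \bigcup_n F n = A `&` `]-oo, s[.
  apply/seteqP; split => x.
    move=> [n _ [Ax]]; rewrite /= !in_itv /= => xs; split => //.
    by apply: (lt_le_trans xs); rewrite lerBlDr lerDl invr_ge0.
  move=> [Ax]; rewrite /= in_itv /= => xs.
  have [k hk] := ltr_add_invr xs.
  by exists k => //; split => //=; rewrite in_itv /= ltrBrDr.
have ndF : nondecreasing_seq F.
  move=> n m nm; apply/subsetPset; apply: setIS => x /=; rewrite !in_itv /= => xs.
  apply: (lt_le_trans xs); apply: lerB => //.
  by rewrite lef_pV2 ?posrE ?ltr0n // ler_nat ltnS.
have mUF : measurable (\bigcup_n F n) by rewrite UF; exact: measurable_below.
have cvF := nondecreasing_cvg_mu (mu := mu) mF mUF ndF.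
pose M := (v + cdf s) / 2.
have vM : v < M by rewrite /M ltr_pdivlMr // mulr2n mulrDr mulr1 ltrD2l.
have Ms : M < cdf s by rewrite /M ltr_pdivrMr // mulr2n mulrDr mulr1 ltrD2r.
have : \forall n \near \oo, (M%:E <= mu (F n))%E.
  apply: lte_lim.
  - move=> n m nm /=; apply: le_measure; rewrite ?inE; [exact: mF | exact: mF |].
    by apply/subsetPset; exact: ndF.
  - by apply/cvg_ex; eexists; exact: cvF.
  - rewrite (cvg_lim _ cvF) // UF.
    apply: (@lt_le_trans _ _ (cdf s)%:E); first by rewrite lte_fin.
    by rewrite le_eqVlt; apply/orP; left; apply/eqP; exact: esym (cdfE s).
case=> N _ /(_ N (leqnn N)) /= hN.
exists (s - N.+1%:R^-1); first by rewrite ltrBlDr ltrDl invr_gt0 ltr0n.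
apply: (lt_le_trans vM); rewrite -lee_fin; apply: (le_trans hN).
by rewrite le_eqVlt; apply/orP; left; apply/eqP; exact: cdfE.
Qed.

Definition quantile_set (u : R) :=
  [set s : R | s <= 1 /\ (s <= 0 \/ cdf s <= u - b)].
Definition quantile (u : R) := sup (quantile_set u).
Definition window := `[b, b + mass[%classic.

Let quantile_set0 u : quantile_set u 0.
Proof. by split; [exact: ler01 | left]. Qed.

Let quantile_set_ub u : ubound (quantile_set u) 1.
Proof. by move=> s []. Qed.

Let quantile_set_has_sup u : has_sup (quantile_set u).
Proof. by split; [exists 0; exact: quantile_set0 | exists 1; exact: quantile_set_ub]. Qed.

Lemma quantile_I01 u : @I01 R (quantile u).
Proof.
rewrite /I01 /= in_itv /=; apply/andP; split.
  exact: sup_upper_bound (quantile_set_has_sup u) _ (quantile_set0 u).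
by apply: ge_sup; [exists 0; exact: quantile_set0 | exact: quantile_set_ub].
Qed.

Lemma quantile_nondecreasing : {homo quantile : u v / u <= v}.
Proof.
move=> u v uv; apply: ge_sup; first by exists 0; exact: quantile_set0.
move=> s [s1 H]; apply: sup_upper_bound; first exact: quantile_set_has_sup.
split => //.
by case: H => H; [left | right; apply: (le_trans H); rewrite lerD2r].
Qed.

Lemma measurable_quantile : measurable_fun setT quantile.
Proof.
by apply: measurable_realfun.nondecreasing_measurable => //; exact: quantile_nondecreasing.
Qed.

Lemma quantile_lt u s : 0 <= u - b < mass -> (quantile u < s <-> u - b < cdf s).
Proof.
move=> /andP[v0 va]; split.
- move=> Ss; rewrite ltNge; apply/negP => Gs.
  have [s1|s1] := leP s 1; last by move: Gs; rewrite cdf_gt1 // leNgt va.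
  have /(sup_upper_bound (quantile_set_has_sup u)) : quantile_set u s.
    by split => //; right.
  by move/(lt_le_trans Ss); rewrite ltxx.
- move=> /cdf_left_continuous [s' s's vs'].
  apply: (le_lt_trans _ s's); apply: ge_sup; first by exists 0; exact: quantile_set0.
  move=> r [r1 H]; rewrite leNgt; apply/negP => s'r.
  have := cdf_nondecreasing (ltW s'r) => /(lt_le_trans vs').
  case: H => H; first by rewrite cdf_le0 // => /(le_lt_trans v0); rewrite ltxx.
  by move/(le_lt_trans H); rewrite ltxx.
Qed.

Lemma quantile_preimage_ray x :
  quantile @^-1` `]-oo, x[ `&` window = `[b, b + cdf x[%classic.
Proof.
have key u : b <= u -> u < b + mass -> (quantile u < x <-> u < b + cdf x).
  move=> bu ua; rewrite -ltrBlDl; apply: quantile_lt.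
  by rewrite subr_ge0 bu ltrBlDl.
apply/seteqP; split => u /=.
- rewrite /window /= !in_itv /= => -[ux /andP[bu ua]].
  by rewrite bu /=; apply/(key u bu ua).
- rewrite /window /= !in_itv /= => /andP[bu ux].
  have ua : u < b + mass by apply: (lt_le_trans ux); rewrite lerD2l cdf_le_mass.
  by rewrite bu ua; split => //; apply/(key u bu ua).
Qed.

(* Uniqueness of measures: both sides agree on the rays ]-oo, x[, a pi-system
   generating the Borel sets. *)
Lemma quantile_pushforward B : measurable B ->
  mu (quantile @^-1` B `&` window) = mu (A `&` B).
Proof.
move=> mB.
pose G := @measurable_realfun.RGenInftyO.G R.
have mG : @measurable _ (measurableTypeR R) = G.-sigma.-measurable.
  exact: measurable_realfun.RGenInftyO.measurableE.
have setIG : setI_closed G.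
  move=> X Y [x ->] [y ->]; exists (Order.min x y).
  apply/seteqP; split => z /=; rewrite !in_itv /= ?lt_min; [by case=> -> -> | by case/andP].
have Gg (k : nat) : G `]-oo, k%:R[%classic by exists k%:R.
have cover : \bigcup_k `]-oo, (k%:R : R)[%classic = setT.
  apply/seteqP; split => // z _ /=.
  exists (Num.Def.archi_bound `|z|) => //=; rewrite in_itv /=.
  exact: le_lt_trans (ler_norm z) (archi_boundP _).
have mwindow : measurable window by exact: measurable_itv.
suff : (@pushforward _ _ (measurableTypeR R) (measurableTypeR R) R
    (mrestr mu mwindow) quantile) B = (mrestr mu mA) B.
  by rewrite /pushforward /mrestr => ->; rewrite setIC.
unshelve eapply (@measure_unique _ R (measurableTypeR R) G
  (fun k => `]-oo, k%:R[%classic) mG setIG Gg cover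
  (@pushforward _ _ (measurableTypeR R) (measurableTypeR R) R (mrestr mu mwindow) quantile)
  (mrestr mu mA) _ _ B mB).
- exact: measurable_quantile.
- move=> _ [x ->]; rewrite /pushforward /mrestr.
  change (mu (quantile @^-1` `]-oo, x[ `&` window) = mu (`]-oo, x[ `&` A)).
  rewrite quantile_preimage_ray setIC cdfE lebesgue_measure_itv /= lte_fin ltrDl.
  have := cdf_ge0 x; rewrite le_eqVlt => /orP[/eqP <- | ->]; first by rewrite ltxx.
  by rewrite -EFinD addrAC subrr add0r.
- move=> k; rewrite /pushforward /mrestr.
  change (mu (quantile @^-1` `]-oo, k%:R[ `&` window) < +oo)%E.
  by rewrite quantile_preimage_ray lebesgue_measure_itv; case: ifP => _; rewrite ?ltry.
Qed.

Lemma ae_quantile (P : R -> Prop) :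
  ae01 P -> ae01 (fun u => window u -> P (quantile u)).
Proof.
rewrite /ae01 /leb => -[N [mN N0 PN]].
exists (quantile @^-1` N `&` window); split.
- apply: measurableI; last exact: measurable_itv.
  by rewrite -[X in measurable X]setTI; exact: measurable_quantile.
- rewrite quantile_pushforward //; apply/eqP; rewrite eq_le measure_ge0 andbT -N0.
  by apply: le_measure; rewrite ?inE //; exact: measurableI.
- move=> u /= nP; split; last first.
    by apply: contrapT => Ju; apply: nP => _ /Ju [].
  by apply: PN => /= P_q; apply: nP => _ Ju; exact: P_q (quantile_I01 u).
Qed.

End Quantile.

Section Transplant.
Variables (R : realType) (A : set R) (b : R).
Hypotheses (mA : measurable A) (AI : A `<=` @I01 R).
Hypotheses (b0 : 0 <= b) (b1 : b + mass A <= 1).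
Local Notation mu := (@lebesgue_measure R).
Local Notation window := (window A b).
Local Notation quantile := (quantile A b).

Definition transplant (f : R -> R) (u : R) : R := \1_window u * f (quantile u).

Lemma window_sub_I01 : window `<=` @I01 R.
Proof.
move=> u; rewrite /window /I01 /= !in_itv /= => /andP[bu ub].
by rewrite (le_trans b0 bu) /= (le_trans (ltW ub) b1).
Qed.

Lemma transplant_in f u : window u -> transplant f u = f (quantile u).
Proof. by move=> Ju; rewrite /transplant indicE mem_set // mul1r. Qed.

Lemma transplant_out f u : ~ window u -> transplant f u = 0.
Proof. by move=> Ju; rewrite /transplant indicE memNset // mul0r. Qed.

Lemma measurable_transplant f : measurable_fun (@I01 R) f ->
  measurable_fun (@I01 R) (transplant f).
Proof.
move=> mf.
have mfq : measurable_fun setT (f \o quantile).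
  apply: (measurable_comp (@measurable_I01 R) _ mf (measurable_quantile A b)).
  by move=> _ [u _ <-]; exact: quantile_I01.
apply: (measurable_funS measurableT (@subsetT _ _)).
apply: measurable_realfun.measurable_funM => //.
by apply: measurable_realfun.measurable_indic; exact: measurable_itv.
Qed.

Section SupportedInA.
Variable f : R -> R.
Hypotheses (mf : measurable_fun (@I01 R) f) (fA : forall s, @I01 R s -> f s != 0 -> A s).

Lemma distr_transplant t : 0 <= t -> distr (transplant f) t = distr f t.
Proof.
move=> t0; rewrite /distr.
pose E := [set s | @I01 R s /\ t < `|f s|].
have mE : measurable E.
  have -> : E = @I01 R `&` ((fun s => `|f s|) @^-1` `]t, +oo[).
    by apply/seteqP; split => s /=; rewrite in_itv /= andbT.
  have mnf : measurable_fun (@I01 R) (Num.Def.normr \o f).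
    by apply: measurableT_comp => //; exact: measurable_realfun.normr_measurable.
  exact: (mnf (@measurable_I01 R) _ (measurable_itv _)).
have -> : [set u | @I01 R u /\ t < `|transplant f u|] = quantile @^-1` E `&` window.
  apply/seteqP; split => u /=.
  - move=> [Iu tu]; have Ju : window u.
      apply: contrapT => Ju; move: tu; rewrite transplant_out // normr0.
      by move/(le_lt_trans t0); rewrite ltxx.
    move: tu; rewrite transplant_in // => tu.
    by split => //; split => //; exact: quantile_I01.
  - by move=> [[_ tu] Ju]; split; [exact: window_sub_I01 | rewrite transplant_in].
rewrite /leb quantile_pushforward //; congr (mu _).
apply/seteqP; split => s; first by case.
by move=> [Is ts]; split => //; apply: fA => //; rewrite -normr_gt0 (le_lt_trans t0).
Qed.

Lemma rearr_transplant t : rearr (transplant f) t = rearr f t.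
Proof.
rewrite /rearr; congr (ereal_inf (_ @` _)).
apply/seteqP; split => s /= [s0 h].
  by rewrite -distr_transplant.
by rewrite distr_transplant.
Qed.

End SupportedInA.

Lemma disjoint_seq_transplant (x : nat -> R -> R) :
  disjoint_seq x -> disjoint_seq (fun k => transplant (x k)).
Proof.
move=> dx j k jk.
apply: (ae01S _ (ae_quantile mA AI b (dx j k jk))) => u Iu H.
have [Ju | Ju] := pselect (window u); last by left; exact: transplant_out.
by rewrite !transplant_in //; exact: H.
Qed.

End Transplant.

Section Tail.
Variables (R : realType) (x : nat -> R -> R).
Hypotheses (mx : forall n, measurable_fun (@I01 R) (x n)) (dx : disjoint_seq x).
Local Notation mu := (@lebesgue_measure R).

Definition support k := @I01 R `&` [set s | x k s != 0].
Definition tail_support n := \bigcup_(k in [set k | (n <= k)%N]) support k.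

Lemma measurable_support k : measurable (support k).
Proof.
have -> : support k = @I01 R `&` x k @^-1` (~` [set 0]).
  by apply/seteqP; split => s [Is h]; split => //=; apply/eqP.
apply: (mx k (@measurable_I01 R)); apply: measurableC; exact: measurable_set1.
Qed.

Lemma measurable_tail_support n : measurable (tail_support n).
Proof. by apply: bigcup_measurable => k _; exact: measurable_support. Qed.

Lemma tail_support_sub_I01 n : tail_support n `<=` @I01 R.
Proof. by move=> s [k _ []]. Qed.

(* A point in infinitely many supports lies in two of them. *)
Lemma lim_sup_support_null : mu (lim_sup_set support) = 0%E.
Proof.
pose Bad j k := [set s | j != k /\ @I01 R s /\ x j s != 0 /\ x k s != 0].
have nBad j k : mu.-negligible (Bad j k).
  have [->|jk] := eqVneq j k.
    by apply: (negligibleS _ (@negligible_set0 _ _ _ mu)) => s [/eqP].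
  have := dx (elimN eqP jk); rewrite /ae01 => djk.
  apply: (negligibleS _ djk) => s [_ [Is [xj xk]]] /=.
  by move=> /(_ Is) [/eqP|/eqP]; [rewrite (negbTE xj) | rewrite (negbTE xk)].
have mL : measurable (lim_sup_set support).
  apply: bigcap_measurable => // n _; apply: bigcup_measurable => k _.
  exact: measurable_support.
apply/(@negligibleP _ _ _ mu _ mL).
have nU : mu.-negligible (\bigcup_j \bigcup_k Bad j k).
  by apply: negligible_bigcup => j; apply: negligible_bigcup => k; exact: nBad.
apply: (negligibleS _ nU) => s Ls; have [j /= _ [Is xj]] := Ls 0%N I.
have [k /= jk [_ xk]] := Ls j.+1 I.
by exists j => //; exists k => //; split; first by rewrite neq_ltn jk.
Qed.

Lemma tail_support_small eps : 0 < eps ->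
  exists n, (mu (tail_support n) <= eps%:E)%E.
Proof.
move=> eps0.
have fin0 : (mu (tail_support 0) < +oo)%E.
  rewrite lebesgue_sub_I01 ?ltry //; first exact: measurable_tail_support.
  exact: tail_support_sub_I01.
have cv0 : mu (tail_support n) @[n --> \oo] --> 0%E.
  rewrite -lim_sup_support_null.
  exact: lim_sup_set_cvg mu support measurable_support fin0.
move/fine_cvgP: cv0 => [fin cv1].
have := cvgr_lt _ cv1 _ eps0.
case: fin => N1 _ fin; case=> N2 _ small.
exists (maxn N1 N2); rewrite -(fineK (fin _ (leq_maxl _ _))) lee_fin.
exact/ltW/small/leq_maxr.
Qed.

End Tail.

Section Subsequences.
Variables (R : realType) (p : \bar R).
Hypothesis p1 : (1%:E < p)%E.

Lemma strictly_incr_ge phi : strictly_incr phi -> forall n, (n <= phi n)%N.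
Proof.
by move=> phi_incr; elim=> [|n IH] //; exact: leq_ltn_trans IH (phi_incr _ _ (ltnSn n)).
Qed.

Lemma strictly_incr_shift phi m :
  strictly_incr phi -> strictly_incr (fun j => phi (j + m)%N).
Proof. by move=> phi_incr i j ij; apply: phi_incr; rewrite ltn_add2r. Qed.

Lemma bigmax_norm_ge0 N (c : nat -> R) : 0 <= \big[Num.max/0]_(k < N) `|c k|.
Proof. by elim/big_ind: _ => // u v hu hv; rewrite le_max hu. Qed.

Lemma lpnorm_ge0 N (c : nat -> R) : 0 <= lpnorm p N c.
Proof. by case: p => [q | |] /=; [exact: powR_ge0 | exact: bigmax_norm_ge0 ..]. Qed.

(* Pad the coefficients with a leading 0; this needs p <> 0 for 0 `^ p = 0. *)
Lemma upper_p_estimate_succ nrm (x : nat -> R -> R) phi C :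
  upper_p_estimate nrm p x phi C ->
  upper_p_estimate nrm p x (fun j => phi j.+1) C.
Proof.
move=> est N c'.
pose c j := if j is j'.+1 then c' j' else 0.
have Ecomb : comb x phi N.+1 c = comb x (fun j => phi j.+1) N c'.
  apply: funext => s; rewrite /comb big_ord_recl /= mul0r add0r.
  by apply: eq_bigr => i _; rewrite /bump.
have Elp : lpnorm p N.+1 c = lpnorm p N c'.
  rewrite /lpnorm; case: p p1 => [q | // | //] q1.
    congr (_ `^ _); rewrite big_ord_recl /= normr0 powR0 ?add0r.
      by apply: eq_bigr => i _; rewrite /bump.
    by rewrite lte_fin in q1; apply/negP => /eqP q0; rewrite q0 ltr10 in q1.
  rewrite big_ord_recl /= normr0 max_r; last exact: bigmax_norm_ge0.
  by apply: eq_bigr => i _; rewrite /bump.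
by rewrite -Ecomb -Elp; exact: est.
Qed.

Lemma upper_p_estimate_shift nrm (x : nat -> R -> R) phi C m :
  upper_p_estimate nrm p x phi C ->
  upper_p_estimate nrm p x (fun j => phi (j + m)%N) C.
Proof.
elim: m => [|m IH] est.
  by rewrite (_ : (fun j => phi (j + 0)%N) = phi) //; apply: funext => j; rewrite addn0.
rewrite (_ : (fun j => phi (j + m.+1)%N) = (fun j => phi (j.+1 + m)%N)).
  exact: upper_p_estimate_succ (IH est).
by apply: funext => j; rewrite addSnnS.
Qed.

End Subsequences.

Section SymmetricSpace.
Variables (R : realType) (mem : set (R -> R)) (nrm : (R -> R) -> R).
Hypothesis hS : is_symmetric_space mem nrm.

Lemma sym_measurable (x : R -> R) : mem x -> measurable_fun (@I01 R) x.
Proof. by case: hS => [[h _] _ _ _ _]; exact: h. Qed.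

Lemma sym_mem0 : mem (fun _ => 0).
Proof. by case: hS => [[_ [h _]] _ _ _ _]. Qed.

Lemma sym_memD (x y : R -> R) : mem x -> mem y -> mem (fun s => x s + y s).
Proof. by case: hS => [[_ [_ [h _]]] _ _ _ _]; exact: h. Qed.

Lemma sym_memZ (a : R) (x : R -> R) : mem x -> mem (fun s => a * x s).
Proof. by case: hS => [[_ [_ [_ h]]] _ _ _ _]; exact: h. Qed.

Lemma sym_normD (x y : R -> R) : mem x -> mem y ->
  nrm (fun s => x s + y s) <= nrm x + nrm y.
Proof. by case: hS => [_ [_ [h _]] _ _ _]; exact: h. Qed.

Lemma sym_normZ (a : R) (x : R -> R) : mem x ->
  nrm (fun s => a * x s) = `|a| * nrm x.
Proof. by case: hS => [_ [_ [_ h]] _ _ _]; exact: h. Qed.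

Lemma sym_ideal (x y : R -> R) : measurable_fun (@I01 R) x -> mem y ->
  ae01 (fun s => `|x s| <= `|y s|) -> mem x /\ nrm x <= nrm y.
Proof. by case: hS => [_ _ _ h _]; exact: h. Qed.

Lemma sym_rearr (x y : R -> R) : measurable_fun (@I01 R) x -> mem y ->
  (forall t, @I01 R t -> rearr x t = rearr y t) -> mem x /\ nrm x = nrm y.
Proof. by case: hS => [_ _ _ _ h]; exact: h. Qed.

Lemma sym_norm0 : nrm (fun _ => 0) = 0.
Proof. by have := sym_normZ 0 sym_mem0; rewrite normr0 !mul0r. Qed.

Lemma sym_sum n (F : nat -> R -> R) : (forall i, mem (F i)) ->
  mem (fun s => \sum_(i < n) F i s) /\
  nrm (fun s => \sum_(i < n) F i s) <= \sum_(i < n) nrm (F i).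
Proof.
move=> mF; elim: n => [|n [IHm IHn]].
  rewrite (_ : (fun s => _) = (fun _ => 0)); last by apply: funext => s; rewrite big_ord0.
  by rewrite big_ord0 sym_norm0; split => //; exact: sym_mem0.
rewrite (_ : (fun s => _) = (fun s => \sum_(i < n) F i s + F n s)); last first.
  by apply: funext => s; rewrite big_ord_recr.
split; first exact: sym_memD.
by rewrite big_ord_recr /=; apply: le_trans (sym_normD IHm (mF n)) _; rewrite lerD2r.
Qed.

Lemma sym_comb (x : nat -> R -> R) phi N c :
  (forall k, mem (x k)) -> mem (comb x phi N c).
Proof. by move=> mx; apply: (sym_sum _ (fun i => sym_memZ _ (mx (phi i)))).1. Qed.

End SymmetricSpace.

Section Weights.
Variable R : realType.

Definition weight (m : nat) : R := (2 ^+ m.+1)^-1.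

Lemma weight_gt0 m : 0 < weight m.
Proof. by rewrite invr_gt0 exprn_gt0. Qed.

Lemma weight_ge0 m : 0 <= weight m.
Proof. exact/ltW/weight_gt0. Qed.

Lemma sum_weight n : \sum_(m < n) weight m = 1 - (2 ^+ n)^-1.
Proof.
elim: n => [|n IH]; first by rewrite big_ord0 expr0 invr1 subrr.
rewrite big_ord_recr /= IH /weight -addrA; congr (_ + _).
by rewrite exprS invfM; field; rewrite expf_neq0.
Qed.

Lemma sum_weight_le1 n : \sum_(m < n) weight m <= 1.
Proof. by rewrite sum_weight lerBlDr lerDl invr_ge0 exprn_ge0. Qed.

Lemma double_weight m : 2 * weight m = (2 ^+ m)^-1.
Proof. by rewrite /weight exprS invfM mulrA divff ?mul1r. Qed.

Lemma double_weight_le1 m : 2 * weight m <= 1.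
Proof. by rewrite double_weight invf_le1 ?exprn_gt0 // exprn_ege1 // ler1n. Qed.

Lemma double_weight_le i m : (i < m)%N -> 2 * weight m <= weight i.
Proof.
move=> im; rewrite double_weight /weight lef_pV2 ?posrE ?exprn_gt0 //.
by rewrite ler_eXn2l // ltr1n.
Qed.

End Weights.

Section Counterexample.
Variables (R : realType) (mem : set (R -> R)) (nrm : (R -> R) -> R) (p : \bar R).
Hypothesis hS : is_symmetric_space mem nrm.
Local Notation mu := (@lebesgue_measure R).

Definition defeated_constant (m : nat) : R := m.+1%:R / weight R m.

Definition concentrated_counterexample m (xA : (nat -> R -> R) * set R) :=
  [/\ normalized_disjoint mem nrm xA.1, measurable xA.2 /\ xA.2 `<=` @I01 R,
      (mu xA.2 <= (weight R m)%:E)%E,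
      (forall k s, @I01 R s -> xA.1 k s != 0 -> xA.2 s) &
      (forall phi, strictly_incr phi ->
         ~ upper_p_estimate nrm p xA.1 phi (defeated_constant m))].

Lemma not_UD_counterexample K : ~ property_UD mem nrm p -> 0 < K ->
  exists2 x, normalized_disjoint mem nrm x &
    forall phi, strictly_incr phi -> ~ upper_p_estimate nrm p x phi K.
Proof.
move=> nUD K0; apply: contrapT => noK; apply: nUD; exists K; split => // x nx.
apply: contrapT => noest; apply: noK; exists x => // phi phi_incr est.
by apply: noest; exists phi.
Qed.

Lemma concentrated_counterexample_ex m : ~ property_UD mem nrm p ->
  exists xA, concentrated_counterexample m xA.
Proof.
move=> nUD.
have K0 : 0 < defeated_constant m by rewrite divr_gt0 // weight_gt0.
have [x [memx [normx dx]] noest] := not_UD_counterexample nUD K0.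
have mx n : measurable_fun (@I01 R) (x n) by exact: (sym_measurable hS (memx n)).
have [n hn] := tail_support_small mx dx (weight_gt0 R m).
exists (fun k => x (k + n)%N, tail_support x n); split => /=.
- split => //; split => // i j ij; apply: dx => /eqP; rewrite eqn_add2r => /eqP //.
- by split; [exact: measurable_tail_support | exact: tail_support_sub_I01].
- exact: hn.
- by move=> k s Is xs; exists (k + n)%N => //=; rewrite leq_addl.
- move=> phi phi_incr; apply: (noest (fun j => (phi j + n)%N)).
  by move=> i j ij; rewrite ltn_add2r; exact: phi_incr.
Qed.

End Counterexample.

Section Glue.
Variables (R : realType) (mem : set (R -> R)) (nrm : (R -> R) -> R) (p : \bar R).
Hypotheses (p1 : (1%:E < p)%E) (hS : is_symmetric_space mem nrm).
Variable XA : nat -> (nat -> R -> R) * set R.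
Hypothesis hXA : forall m, concentrated_counterexample mem nrm p m (XA m).
Local Notation w := (weight R).

Let X m := (XA m).1.
Let A m := (XA m).2.
Let J m := window (A m) (w m).
Let h m k := transplant (A m) (w m) (X m k).

Let normalized_X m : normalized_disjoint mem nrm (X m). Proof. by case: (hXA m). Qed.
Let mem_X m k : mem (X m k). Proof. by case: (normalized_X m). Qed.
Let measurable_A m : measurable (A m). Proof. by case: (hXA m) => _ []. Qed.
Let A_sub_I01 m : A m `<=` @I01 R. Proof. by case: (hXA m) => _ []. Qed.
Let X_supp m k s : @I01 R s -> X m k s != 0 -> A m s.
Proof. by case: (hXA m) => _ _ _ supp _; exact: supp. Qed.
Let X_defeats m phi : strictly_incr phi ->
  ~ upper_p_estimate nrm p (X m) phi (defeated_constant R m).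
Proof. by case: (hXA m) => _ _ _ _ defeats; exact: defeats. Qed.

Let mass_le m : mass (A m) <= w m.
Proof.
case: (hXA m) => _ _ muA _ _.
by rewrite -lee_fin -(massE (measurable_A m) (@A_sub_I01 m)).
Qed.

Let window_le1 m : w m + mass (A m) <= 1.
Proof.
apply: le_trans _ (double_weight_le1 R m).
by rewrite mulr2n mulrDl mul1r lerD2l; exact: mass_le.
Qed.

Let window_bounds m u : J m u -> w m <= u < 2 * w m.
Proof.
rewrite /J /window /= in_itv /= => /andP[-> ub] /=.
by apply: (lt_le_trans ub); rewrite mulr2n mulrDl mul1r lerD2l; exact: mass_le.
Qed.

Let windows_disjoint i m u : J i u -> J m u -> i = m.
Proof.
have sep i' m' : (i' < m')%N -> J i' u -> J m' u -> False.
  move=> im /window_bounds /andP[i1 _] /window_bounds /andP[_ m2].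
  by have := lt_le_trans m2 (le_trans (double_weight_le R im) i1); rewrite ltxx.
move=> Ji Jm; have [im | mi | //] := ltngtP i m.
  by case: (sep i m im Ji Jm).
by case: (sep m i mi Jm Ji).
Qed.

Let transplant_X m k : mem (h m k) /\ nrm (h m k) = nrm (X m k).
Proof.
have mX := sym_measurable hS (mem_X m k).
apply: (sym_rearr hS (measurable_transplant _ _ mX) (mem_X m k)) => t _.
exact: (rearr_transplant (measurable_A m) (@A_sub_I01 m) (weight_ge0 R m)
  (window_le1 m) mX (@X_supp m k)).
Qed.

Definition glued k s := \sum_(m < k.+1) w m * transplant (A m) (w m) (X m k) s.

Lemma glued_window m k u : J m u -> (m <= k)%N ->
  glued k u = w m * X m k (quantile (A m) (w m) u).
Proof.
move=> Jm mk; rewrite /glued (bigD1 (Ordinal (mk : (m < k.+1)%N))) //= big1 ?addr0.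
  by rewrite transplant_in.
move=> i /eqP ni; rewrite transplant_out ?mulr0 // => Ji.
by apply: ni; apply: val_inj => /=; exact: windows_disjoint Ji Jm.
Qed.

Lemma glued_neq0 k u : glued k u != 0 -> exists2 m, (m <= k)%N & J m u.
Proof.
move=> /eqP g0; apply: contrapT => noJ; apply: g0; rewrite /glued big1 // => i _.
rewrite transplant_out ?mulr0 // => Ji; apply: noJ; exists i => //.
by rewrite -ltnS; exact: ltn_ord.
Qed.

Lemma glued_normalized_disjoint : normalized_disjoint mem nrm glued.
Proof.
have norm_glued k : mem (glued k) /\ nrm (glued k) <= 1.
  have [memg normg] := @sym_sum _ _ _ hS k.+1 (fun i s => w i * h i k s)
    (fun i => sym_memZ hS (w i) (transplant_X i k).1).
  split => //; apply: (le_trans normg); apply: le_trans _ (sum_weight_le1 R k.+1).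
  apply: ler_sum => i _; rewrite (sym_normZ hS _ (transplant_X i k).1) (transplant_X i k).2.
  rewrite (ger0_norm (weight_ge0 R i)) ler_piMr ?weight_ge0 //.
  by case: (normalized_X i) => _ [].
split; first by move=> k; case: (norm_glued k).
split; first by move=> k; case: (norm_glued k).
move=> j k jk.
have dh m : ae01 (fun s => h m j s = 0 \/ h m k s = 0).
  have dX : disjoint_seq (X m) by case: (normalized_X m) => _ [].
  exact: (disjoint_seq_transplant (w m) (measurable_A m) (@A_sub_I01 m) dX jk).
apply: (ae01S _ (ae01_foralln dh)) => s Is dh_s.
apply: contrapT => /not_orP [/eqP gj /eqP gk].
have [m mj Jm] := glued_neq0 gj; have [m' mk Jm'] := glued_neq0 gk.
have mm := windows_disjoint Jm' Jm; subst m'.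
move: gj gk; rewrite (glued_window Jm mj) (glued_window Jm mk).
have := dh_s m; rewrite /h !transplant_in //.
by case=> ->; rewrite mulr0 eqxx.
Qed.

(* On the m-th window a combination of glued terms of index >= m is w_m times
   the transplant of the same combination of the m-th sequence; conclude by the
   ideal property and rearrangement invariance. *)
Lemma comb_glued_ge m phi N c : (forall j, (m <= phi j)%N) ->
  w m * nrm (comb (X m) phi N c) <= nrm (comb glued phi N c).
Proof.
move=> phim; set f := comb (X m) phi N c.
have memf : mem f := sym_comb hS _ _ _ (mem_X m).
have mf := sym_measurable hS memf.
have fA s : @I01 R s -> f s != 0 -> A m s.
  move=> Is fs; apply: contrapT => nA; move/eqP: fs; apply.
  rewrite /f /comb big1 // => i _.
  by have [-> | /(X_supp Is) /nA []] := eqVneq (X m (phi i) s) 0; exact: mulr0.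
set g := transplant (A m) (w m) f.
have [memg normg] : mem g /\ nrm g = nrm f.
  apply: (sym_rearr hS (measurable_transplant _ _ mf) memf) => t _.
  exact: (rearr_transplant (measurable_A m) (@A_sub_I01 m) (weight_ge0 R m)
    (window_le1 m) mf fA).
rewrite -normg -[w m](ger0_norm (weight_ge0 R m)) -(sym_normZ hS _ memg).
apply: (proj2 (sym_ideal hS _ (sym_comb hS phi N c (proj1 glued_normalized_disjoint)) _)).
  exact: (measurable_realfun.measurable_funM (measurable_cst _)
    (measurable_transplant _ _ mf)).
apply: aeW => s _.
have [Js | Js] := pselect (J m s); last first.
  by rewrite /g transplant_out // mulr0 normr0 normr_ge0.
have -> : comb glued phi N c s = w m * g s; last by [].
rewrite /g transplant_in // /f /comb mulr_sumr; apply: eq_bigr => i _.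
by rewrite (glued_window Js (phim i)) mulrCA.
Qed.

Lemma glued_no_upper_estimate phi C : strictly_incr phi ->
  ~ upper_p_estimate nrm p glued phi C.
Proof.
move=> phi_incr est.
pose m := Num.Def.archi_bound `|C|.
have Cm : C <= m.+1%:R.
  apply: le_trans (ler_norm C) (ltW (lt_le_trans (archi_boundP (normr_ge0 C)) _)).
  by rewrite ler_nat leqnSn.
have psi_ge j : (m <= phi (j + m))%N.
  exact: leq_trans (leq_addl j m) (strictly_incr_ge phi_incr _).
apply: (@X_defeats m _ (strictly_incr_shift m phi_incr)) => N c.
rewrite -(ler_pM2l (weight_gt0 R m)) mulrA (mulrC (w m) (defeated_constant R m)).
rewrite /defeated_constant (mulfVK (lt0r_neq0 (weight_gt0 R m))).
apply: le_trans (comb_glued_ge N c psi_ge) _.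
apply: le_trans (upper_p_estimate_shift p1 m est N c) _.
exact: (ler_wpM2r (lpnorm_ge0 p N c) Cm).
Qed.

End Glue.

Theorem mainTheorem7 (R : realType) (p : \bar R) (mem : set (R -> R))
    (nrm : (R -> R) -> R) :
  (1%:E < p)%E -> is_symmetric_space mem nrm ->
  property_D mem nrm p -> property_UD mem nrm p.
Proof.
move=> p1 hS hD; apply: contrapT => nUD.
have [XA hXA] := choice (fun m => concentrated_counterexample_ex hS m nUD).
have [phi [phi_incr [C [_ est]]]] := hD _ (glued_normalized_disjoint hS hXA).
exact: (glued_no_upper_estimate p1 hS hXA phi_incr est).
Qed.
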